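(* Let $g:\mathbb{R}^N\to\mathbb{R}\cup\{+\infty\}$ be proper and lower semi-continuous, and let $f:\mathbb{R}^N\to\mathbb{R}$ be continuously differentiable such that, for some $\mathbf{L}\in\mathbb{S}_{++}(N)$, the gradient of $f\circ\mathbf{L}^{-1/2}$ is $1$-Lipschitz continuous; assume $f+g$ is bounded from below. Suppose $f(x)=\frac12\langle x,\mathbf{H}x\rangle+\langle b,x\rangle+c$ with $\mathbf{H}\in\mathbb{S}_{++}(N)$, $b\in\mathbb{R}^N$, $c\in\mathbb{R}$. Let $x_k\in\mathbb{R}^N$, $d\in\mathbb{R}^N\setminus\{0\}$, and for $\beta\in\mathbb{R}$ put $y^{(\beta)}:=x_k+\beta d$. Let $\mathbf{T}\in\mathbb{S}_{++}(N)$ be such that $\mathbf{M}:=\mathbf{T}-\mathbf{H}\in\mathbb{S}_{++}(N)$, and consider $$\min_{x\in\mathbb{R}^N}\min_{\beta\in\mathbb{R}}\ \ell(x;y^{(\beta)})+\tfrac12\|x-y^{(\beta)}\|_{\mathbf{T}}^2,\qquad \ell(x;y):=g(x)+f(y)+\langle\nabla f(y),x-y\rangle.\quad(\ast)$$ Then, for each fixed $x$, the inner minimization over $\beta$ is solved by $$\beta^*=\frac{\langle d,x-x_k\rangle_{\mathbf{M}}}{\langle d,d\rangle_{\mathbf{M}}},$$ and problem $(\ast)$ is equivalent to $$x_{k+1}\in\operatorname*{argmin}_{x\in\mathbb{R}^N}\ g(x)+\tfrac12\big\|x-x_k+\mathbf{Q}^{-1}\nabla f(x_k)\big\|_{\mathbf{Q}}^2,$$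 where $$\mathbf{Q}:=\mathbf{T}-uu^\top,\quad u:=\frac{\mathbf{M}d}{\|d\|_{\mathbf{M}}},\quad \mathbf{Q}^{-1}=\mathbf{T}^{-1}+\frac{\mathbf{T}^{-1}uu^\top\mathbf{T}^{-1}}{1-u^\top\mathbf{T}^{-1}u}.$$
   Context: $\mathbb{S}_{++}(N)$ denotes the set of symmetric positive definite $N\times N$ real matrices. For a matrix $\mathbf{V}$, $\|x\|_{\mathbf{V}}^2:=\langle x,\mathbf{V}x\rangle$ and $\langle x,y\rangle_{\mathbf{V}}:=\langle x,\mathbf{V}y\rangle$, with $\langle\cdot,\cdot\rangle$ the standard Euclidean inner product. ''Equivalent'' means the $x$-components of minimizers of $(\ast)$ are exactly the minimizers of the stated problem. *)

From HB Require Import structures.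
From mathcomp Require Import all_boot all_order all_algebra.
From mathcomp Require Import reals constructive_ereal.
Set Implicit Arguments. Unset Strict Implicit. Unset Printing Implicit Defensive.
Import Order.TTheory GRing.Theory Num.Theory.
Local Open Scope ring_scope.

Section Defs.
Variables (R : realType) (N : nat).

Definition ip (x y : 'cV[R]_N) : R := (x^T *m y) ord0 ord0.
Definition norm2 (x : 'cV[R]_N) : R := Num.sqrt (ip x x).
Definition ipV (V : 'M[R]_N) (x y : 'cV[R]_N) : R := ip x (V *m y).
Definition sqnormV (V : 'M[R]_N) (x : 'cV[R]_N) : R := ipV V x x.
Definition normV (V : 'M[R]_N) (x : 'cV[R]_N) : R := Num.sqrt (sqnormV V x).

Definition spd (A : 'M[R]_N) : Prop :=
  A^T = A /\ forall x : 'cV[R]_N, x != 0 -> 0 < ip x (A *m x).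

Definition is_gradient (F : 'cV[R]_N -> R) (x v : 'cV[R]_N) : Prop :=
  forall e : R, 0 < e -> exists2 dl : R, 0 < dl &
    forall h : 'cV[R]_N, 0 < norm2 h < dl ->
      `|F (x + h) - F x - ip v h| <= e * norm2 h.

Definition vcontinuous (G : 'cV[R]_N -> 'cV[R]_N) : Prop :=
  forall x (e : R), 0 < e -> exists2 dl : R, 0 < dl &
    forall y, norm2 (y - x) < dl -> norm2 (G y - G x) < e.

Definition lsc (g : 'cV[R]_N -> \bar R) : Prop :=
  forall x (a : R), (a%:E < g x)%E -> exists2 dl : R, 0 < dl &
    forall y, norm2 (y - x) < dl -> (a%:E < g y)%E.

Definition proper_fun (g : 'cV[R]_N -> \bar R) : Prop :=
  (forall x, g x != -oo%E) /\ exists x, g x != +oo%E.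
End Defs.

From HB Require Import structures.
From mathcomp Require Import all_boot all_order all_algebra.
From mathcomp Require Import reals constructive_ereal.
From mathcomp Require Import ring lra.
Set Implicit Arguments.
Unset Strict Implicit.
Unset Printing Implicit Defensive.
Import Order.TTheory GRing.Theory Num.Theory.
Local Open Scope ring_scope.

(* Since f is quadratic with Hessian H, its gradient is H x + b, and the
   linearization at y plus the T-proximal term equals
   f x + 1/2 ||x - y||_M^2 with M = T - H.  On the line y = xk + beta d this is
   a scalar quadratic in beta, minimized by the M-projection coefficient
   beta*, with value f x + 1/2 (||e||_M^2 - <u, e>^2), e = x - xk.  Expanding f
   around xk turns this into 1/2 ||e||_Q^2 + <grad f xk, e> + const, and
   completing the square in the Q-norm yields the proximal objective up to an
   additive constant.  Q = H + (M - u u^T) is positive definite by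
   Cauchy-Schwarz for <.,.>_M, and Sherman-Morrison gives its inverse. *)

Section MatrixInnerProduct.
Variables (R : realType) (N : nat).
Implicit Types (x y z e d u v : 'cV[R]_N) (A : 'M[R]_N).

Lemma ipE x y : ip x y = \sum_i x i ord0 * y i ord0.
Proof. by rewrite /ip mxE; apply: eq_bigr => i _; rewrite mxE. Qed.

Lemma ipC x y : ip x y = ip y x.
Proof. by rewrite !ipE; apply: eq_bigr => i _; rewrite mulrC. Qed.

Lemma ipDr x y z : ip x (y + z) = ip x y + ip x z.
Proof. by rewrite /ip mulmxDr mxE. Qed.

Lemma ipDl x y z : ip (x + y) z = ip x z + ip y z.
Proof. by rewrite ipC ipDr !(ipC z). Qed.

Lemma ipZr a x y : ip x (a *: y) = a * ip x y.
Proof. by rewrite /ip -scalemxAr mxE. Qed.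

Lemma ipZl a x y : ip (a *: x) y = a * ip x y.
Proof. by rewrite ipC ipZr ipC. Qed.

Lemma ipNr x y : ip x (- y) = - ip x y.
Proof. by rewrite -scaleN1r ipZr mulN1r. Qed.

Lemma ipNl x y : ip (- x) y = - ip x y.
Proof. by rewrite -scaleN1r ipZl mulN1r. Qed.

Lemma ipBr x y z : ip x (y - z) = ip x y - ip x z.
Proof. by rewrite ipDr ipNr. Qed.

Lemma ipBl x y z : ip (x - y) z = ip x z - ip y z.
Proof. by rewrite ipDl ipNl. Qed.

Lemma ip0l x : ip 0 x = 0.
Proof. by rewrite /ip linear0 mul0mx mxE. Qed.

Lemma ip_trmx A x y : ip x (A *m y) = ip (A^T *m x) y.
Proof. by rewrite /ip trmx_mul trmxK mulmxA. Qed.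

Lemma ip_gt0 x : x != 0 -> 0 < ip x x.
Proof.
move=> x_neq0; have xi2_ge0 i : 0 <= x i ord0 * x i ord0 by rewrite -expr2 sqr_ge0.
rewrite lt_neqAle eq_sym ipE sumr_ge0 // andbT; apply: contra x_neq0.
move=> /eqP/psumr_eq0P x2_eq0; apply/eqP/matrixP => i j.
by rewrite (ord1 j) !mxE; apply/eqP; rewrite -sqrf_eq0 expr2 x2_eq0.
Qed.

Lemma norm2Z t x : 0 <= t -> norm2 (t *: x) = t * norm2 x.
Proof.
move=> t_ge0; rewrite /norm2 ipZl ipZr mulrA -expr2 sqrtrM ?sqr_ge0 //.
by rewrite sqrtr_sqr ger0_norm.
Qed.

Lemma ipV_sym A x y : A^T = A -> ipV A x y = ipV A y x.
Proof. by move=> symA; rewrite /ipV ip_trmx symA ipC. Qed.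

Lemma sqnormV_ge0 A x : spd A -> 0 <= sqnormV A x.
Proof.
case=> _ posA; have [->|/posA/ltW //] := eqVneq x 0.
by rewrite /sqnormV /ipV ip0l.
Qed.

Lemma sqnormVD A x y : A^T = A ->
  sqnormV A (x + y) = sqnormV A x + 2 * ipV A x y + sqnormV A y.
Proof.
move=> symA; have := ipV_sym y x symA.
by rewrite /sqnormV /ipV mulmxDr !ipDl !ipDr => ->; ring.
Qed.

Lemma sqnormV_subZ A e d t : A^T = A ->
  sqnormV A (e - t *: d) = sqnormV A e - 2 * t * ipV A d e + t ^+ 2 * sqnormV A d.
Proof.
move=> symA; have := ipV_sym d e symA.
rewrite sqnormVD // /sqnormV /ipV -scaleNr -scalemxAr ipZl !ipZr => ->; ring.
Qed.

Lemma sqnormV_subr A B x : sqnormV (A - B) x = sqnormV A x - sqnormV B x.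
Proof. by rewrite /sqnormV /ipV mulmxBl ipBr. Qed.

Lemma sqnormV_rank1 u x : sqnormV (u *m u^T) x = ip u x ^+ 2.
Proof.
rewrite /sqnormV /ipV -mulmxA [u^T *m x]mx11_scalar mul_mx_scalar ipZr.
by rewrite -/(ip u x) ipC expr2.
Qed.

Lemma spd_unitmx A : spd A -> A \in unitmx.
Proof.
case=> _ posA; rewrite unitmxE unitfE; apply/negP => /det0P [v v_neq0 vA0].
have vT_neq0 : v^T != 0.
  by apply: contra v_neq0 => /eqP/(congr1 trmx); rewrite trmxK linear0 => ->.
by move: (posA _ vT_neq0); rewrite ip_trmx -trmx_mul vA0 linear0 ip0l ltxx.
Qed.

Lemma sqnormV_line_argmin A e d : A^T = A -> 0 < sqnormV A d ->
  sqnormV A (e - (ipV A d e / sqnormV A d) *: d)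
  = sqnormV A e - ipV A d e ^+ 2 / sqnormV A d.
Proof. by move=> symA Apos; rewrite sqnormV_subZ //; field; rewrite gt_eqF. Qed.

Lemma sqnormV_line_min A e d t : A^T = A -> 0 < sqnormV A d ->
  sqnormV A (e - (ipV A d e / sqnormV A d) *: d) <= sqnormV A (e - t *: d).
Proof.
move=> symA Apos; rewrite sqnormV_line_argmin // sqnormV_subZ // -subr_ge0.
set B := ipV A d e; set C := sqnormV A d.
have -> : sqnormV A e - 2 * t * B + t ^+ 2 * C - (sqnormV A e - B ^+ 2 / C)
          = C * (t - B / C) ^+ 2 by field; rewrite gt_eqF.
by rewrite mulr_ge0 ?sqr_ge0 // ltW.
Qed.

Lemma ipV_sqr_le A e d : A^T = A -> (forall h, 0 <= sqnormV A h) ->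
  0 < sqnormV A d -> ipV A d e ^+ 2 / sqnormV A d <= sqnormV A e.
Proof. by move=> symA psdA Apos; rewrite -subr_ge0 -sqnormV_line_argmin. Qed.

Lemma ip_normalizedV A d x : A^T = A -> 0 < sqnormV A d ->
  ip ((normV A d)^-1 *: (A *m d)) x ^+ 2 = ipV A d x ^+ 2 / sqnormV A d.
Proof.
move=> symA Apos; rewrite ipZl ipC -/(ipV A x d) ipV_sym // exprMn exprVn.
by rewrite /normV sqr_sqrtr ?ltW // mulrC.
Qed.

Lemma sqnormV_add_invmx A e v : A^T = A -> A \in unitmx ->
  sqnormV A (e + invmx A *m v) = sqnormV A e + 2 * ip v e + ip (invmx A *m v) v.
Proof.
move=> symA Aunit; rewrite sqnormVD // /sqnormV /ipV mulmxA mulmxV //.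
by rewrite !mul1mx [ip e v]ipC.
Qed.

Lemma mulmx_subr_rank1 A u : A \in unitmx ->
  (A - u *m u^T) *m (invmx A *m u) = (1 - (u^T *m invmx A *m u) ord0 ord0) *: u.
Proof.
move=> Aunit; rewrite mulmxBl mulKVmx // -(mulmxA u) (mulmxA u^T).
by rewrite [X in u *m X]mx11_scalar mul_mx_scalar scalerBl scale1r.
Qed.

Lemma sherman_morrison A u : A \in unitmx ->
  1 - (u^T *m invmx A *m u) ord0 ord0 != 0 ->
  invmx (A - u *m u^T) = invmx A + (1 - (u^T *m invmx A *m u) ord0 ord0)^-1 *:
                                    (invmx A *m u *m u^T *m invmx A).
Proof.
set a := (u^T *m invmx A *m u) ord0 ord0 => Aunit a_neq1.
set X := invmx A + _.
have QX : (A - u *m u^T) *m X = 1%:M.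
  rewrite mulmxDr -scalemxAr -(mulmxA (invmx A *m u)) (mulmxA (A - _)).
  rewrite mulmx_subr_rank1 // -/a -scalemxAl scalerA mulVf // scale1r.
  by rewrite mulmxBl mulmxV // mulmxA subrK.
by rewrite -[X]mul1mx -(mulVmx (mulmx1_unit QX).1) -mulmxA QX mulmx1.
Qed.

Lemma spd_subr_rank1_denom_neq0 A u : A \in unitmx -> spd (A - u *m u^T) ->
  u != 0 -> 1 - (u^T *m invmx A *m u) ord0 ord0 != 0.
Proof.
move=> Aunit [_ posQ] u_neq0; apply/eqP => a_eq1.
have w_neq0 : invmx A *m u != 0.
  by apply: contra u_neq0 => /eqP w0; rewrite -(mulKVmx Aunit u) w0 mulmx0.
by move: (posQ _ w_neq0); rewrite mulmx_subr_rank1 // a_eq1 scale0r /ip mulmx0 mxE ltxx.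
Qed.
End MatrixInnerProduct.

Section QuadraticFunction.
Variables (R : realType) (N : nat) (A : 'M[R]_N) (b : 'cV[R]_N) (c : R).
Variable f : 'cV[R]_N -> R.
Hypotheses (symA : A^T = A) (fE : forall x, f x = 2^-1 * ip x (A *m x) + ip b x + c).

Lemma quadratic_taylor (y h : 'cV[R]_N) :
  f (y + h) = f y + ip (A *m y + b) h + 2^-1 * sqnormV A h.
Proof.
have := sqnormVD y h symA; rewrite !fE /sqnormV /ipV => ->.
by rewrite ipDl ipDr [ip y (A *m h)]ip_trmx symA; field.
Qed.

Lemma is_gradient_quadratic (y v : 'cV[R]_N) : (forall h, 0 <= sqnormV A h) ->
  is_gradient f y v -> v = A *m y + b.
Proof.
move=> psdA grad_v; apply/eqP; rewrite eq_sym -subr_eq0; apply: contraT => w_neq0.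
set w := A *m y + b - v in w_neq0; set s := norm2 w.
have s_gt0 : 0 < s by rewrite sqrtr_gt0 ip_gt0.
have [dl dl_gt0 small] := grad_v (s / 2) (divr_gt0 s_gt0 (ltr0Sn _ 1)).
pose t := dl / (2 * s).
have t_gt0 : 0 < t by rewrite divr_gt0 // mulr_gt0.
have norm_tw : norm2 (t *: w) = t * s by rewrite norm2Z // ltW.
have dlE : dl = 2 * (t * s) by rewrite /t; field; rewrite gt_eqF.
(* along w the remainder keeps the first-order term t |w|^2, which no
   o(|h|) bound absorbs *)
have lower : t * s ^+ 2 <= f (y + t *: w) - f y - ip v (t *: w).
  rewrite quadratic_taylor /sqnormV /ipV -scalemxAr !ipZl !ipZr.
  have -> : s ^+ 2 = ip w w by rewrite sqr_sqrtr // ltW // ip_gt0.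
  have := mulr_ge0 (ltW t_gt0) (mulr_ge0 (ltW t_gt0) (psdA w)).
  rewrite /sqnormV /ipV /w !ipBl; lra.
have ts_gt0 : 0 < t * s := mulr_gt0 t_gt0 s_gt0.
have upper : f (y + t *: w) - f y - ip v (t *: w) <= s / 2 * (t * s).
  rewrite -norm_tw; apply: le_trans (ler_norm _) (small _ _).
  by rewrite norm_tw dlE ts_gt0 /=; lra.
have : s / 2 * (t * s) < t * s ^+ 2 by rewrite expr2; nra.
by rewrite ltNge (le_trans lower upper).
Qed.
End QuadraticFunction.

Lemma argmin_joint_iff (R : realType) (X B : Type) (Phi : X -> B -> \bar R)
    (Psi : X -> \bar R) (opt : X -> B) (K : R) :
  (forall x beta, (Phi x (opt x) <= Phi x beta)%E) ->
  (forall x, Phi x (opt x) = (Psi x + K%:E)%E) ->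
  forall x, (exists beta, forall x' beta', (Phi x beta <= Phi x' beta')%E)
            <-> (forall x', (Psi x <= Psi x')%E).
Proof.
move=> opt_min PhiE x; split=> [[beta beta_min] x' | Psi_min].
- rewrite -(@leeD2rE _ K%:E) // -!PhiE.
  exact: le_trans (opt_min x beta) (beta_min x' (opt x')).
- exists (opt x) => x' beta'; apply: le_trans (opt_min x' beta').
  by rewrite !PhiE leeD2r.
Qed.

Section ProximalLineSearch.
Variables (R : realType) (N : nat) (f : 'cV[R]_N -> R) (gradf : 'cV[R]_N -> 'cV[R]_N).
Variables (H T : 'M[R]_N) (b xk d : 'cV[R]_N) (c : R).
Implicit Types (x : 'cV[R]_N) (beta : R).
Hypotheses (symH : H^T = H) (symT : T^T = T).
Hypothesis fE : forall x, f x = 2^-1 * ip x (H *m x) + ip b x + c.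
Hypothesis gradfE : forall y, gradf y = H *m y + b.

Let M := T - H.
Let u := (normV M d)^-1 *: (M *m d).
Let Q := T - u *m u^T.
Let betastar x := ipV M d (x - xk) / ipV M d d.
Let model x beta := let y := xk + beta *: d in
  f y + ip (gradf y) (x - y) + 2^-1 * sqnormV T (x - y).

Hypotheses (posM : 0 < sqnormV M d) (unitQ : Q \in unitmx).

Let symM : M^T = M. Proof. by rewrite /M linearB /= symH symT. Qed.
Let symQ : Q^T = Q. Proof. by rewrite /Q linearB /= trmx_mul trmxK symT. Qed.

Lemma u_neq0 : u != 0.
Proof.
apply/eqP => u_eq0; have := ip_normalizedV d symM posM.
rewrite -/u u_eq0 ip0l expr2 mul0r mulfK ?gt_eqF // => C_eq0.
by move: posM; rewrite /sqnormV -C_eq0 ltxx.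
Qed.

Lemma spdQ : spd H -> spd M -> spd Q.
Proof.
move=> spdH spdM; split=> // z z_neq0.
have Hz : 0 < sqnormV H z := spdH.2 z z_neq0.
have uz : ip u z ^+ 2 <= sqnormV M z.
  by rewrite ip_normalizedV //; apply: ipV_sqr_le => // h; apply: sqnormV_ge0.
rewrite [sqnormV M _]sqnormV_subr in uz.
change (0 < sqnormV Q z); rewrite [sqnormV Q _]sqnormV_subr sqnormV_rank1; lra.
Qed.

Lemma model_line x beta :
  model x beta = f x + 2^-1 * sqnormV M (x - xk - beta *: d).
Proof.
rewrite /model; set y := xk + beta *: d.
have -> : x - xk - beta *: d = x - y by rewrite opprD addrA.
have -> : f x = f y + ip (H *m y + b) (x - y) + 2^-1 * sqnormV H (x - y).
  by rewrite -(quadratic_taylor symH fE) addrC subrK.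
by rewrite gradfE sqnormV_subr; field.
Qed.

Lemma model_betastar_min x beta : model x (betastar x) <= model x beta.
Proof.
by rewrite !model_line lerD2l ler_pM2l ?invr_gt0 //; apply: sqnormV_line_min.
Qed.

Lemma model_betastar x : model x (betastar x) =
  2^-1 * sqnormV Q (x - xk + invmx Q *m gradf xk)
  + (f xk - 2^-1 * ip (invmx Q *m gradf xk) (gradf xk)).
Proof.
rewrite model_line.
have -> : x - xk - betastar x *: d
          = x - xk - (ipV M d (x - xk) / sqnormV M d) *: d by [].
rewrite sqnormV_line_argmin // -ip_normalizedV // -/u.
set e := x - xk; set v := gradf xk.
have -> : f x = f xk + ip v e + 2^-1 * sqnormV H e.
  by rewrite /v gradfE -(quadratic_taylor symH fE) addrC subrK.
rewrite sqnormV_add_invmx // [sqnormV Q _]sqnormV_subr sqnormV_rank1.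
by rewrite [sqnormV M _]sqnormV_subr; field.
Qed.
End ProximalLineSearch.

Theorem mainTheorem2 (R : realType) (N : nat)
  (g : 'cV[R]_N -> \bar R) (f : 'cV[R]_N -> R) (gradf : 'cV[R]_N -> 'cV[R]_N)
  (H : 'M[R]_N) (b : 'cV[R]_N) (c : R)
  (xk d : 'cV[R]_N) (T : 'M[R]_N) :
  proper_fun g -> lsc g ->
  (forall y, is_gradient f y (gradf y)) -> vcontinuous gradf ->
  (exists L : 'M[R]_N, spd L /\
     exists S : 'M[R]_N, spd S /\ S *m S = invmx L /\
       exists gS : 'cV[R]_N -> 'cV[R]_N,
         (forall z, is_gradient (fun z => f (S *m z)) z (gS z)) /\
         (forall z w, norm2 (gS z - gS w) <= norm2 (z - w))) ->
  (exists m : R, forall x, (m%:E <= (f x)%:E + g x)%E) ->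
  spd H ->
  (forall x, f x = 2^-1 * ip x (H *m x) + ip b x + c) ->
  d != 0 ->
  spd T -> spd (T - H) ->
  let M := T - H in
  let Phi := fun (x : 'cV[R]_N) (beta : R) =>
    let y := xk + beta *: d in
    (g x + (f y + ip (gradf y) (x - y) + 2^-1 * sqnormV T (x - y))%:E)%E in
  let betastar := fun x : 'cV[R]_N => ipV M d (x - xk) / ipV M d d in
  let u := (normV M d)^-1 *: (M *m d) in
  let Q := T - u *m u^T in
  let Psi := fun x : 'cV[R]_N =>
    (g x + (2^-1 * sqnormV Q (x - xk + invmx Q *m gradf xk))%:E)%E in
  [/\ Q \in unitmx,
      invmx Q = invmx T + (1 - (u^T *m invmx T *m u) ord0 ord0)^-1 *:
                            (invmx T *m u *m u^T *m invmx T),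
      (forall x beta, (Phi x (betastar x) <= Phi x beta)%E) &
      (forall x, (exists beta, forall x' beta', (Phi x beta <= Phi x' beta')%E)
                 <-> (forall x', (Psi x <= Psi x')%E))].
Proof.
move=> _ _ grad_f _ _ _ spdH fE d_neq0 spdT spdM M Phi betastar u Q Psi.
have psdH h : 0 <= sqnormV H h := sqnormV_ge0 h spdH.
have gradfE y : gradf y = H *m y + b :=
  is_gradient_quadratic spdH.1 fE psdH (grad_f y).
have posM : 0 < sqnormV M d := spdM.2 d d_neq0.
have spd_Q : spd Q := spdQ spdH.1 spdT.1 posM spdH spdM.
have unitT := spd_unitmx spdT.
have Phi_min x beta : (Phi x (betastar x) <= Phi x beta)%E.
  apply: leeD2l; rewrite lee_fin.
  exact: (model_betastar_min xk spdH.1 spdT.1 fE gradfE posM).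
split=> //; first exact: spd_unitmx.
- exact: sherman_morrison unitT
    (spd_subr_rank1_denom_neq0 unitT spd_Q (u_neq0 spdH.1 spdT.1 posM)).
- apply: argmin_joint_iff Phi_min _ => x.
  rewrite /Phi -addeA -EFinD; congr (_ + _%:E)%E.
  exact: (model_betastar xk spdH.1 spdT.1 fE gradfE posM (spd_unitmx spd_Q)).
Qed.
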